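(* Let $\alpha>0$. For each $t>0$, the function $\xi\mapsto\rho_\alpha(\|\xi\|,t)$ is a continuous positive definite function on $K$ (with the inductive limit topology), where $\rho_\alpha(s,t)=e^{-ts^\alpha}$ for $s>1$ and $\rho_\alpha(s,t)=1$ for $0\le s\le1$.
   Context: $k$ is a non-Archimedean local field of characteristic $0$; $k=K_1\subset K_2\subset\cdots$ are finite extensions, $K=\bigcup_nK_n$ with the inductive limit topology of the $K_n$; $m_n=[K_n:k]$, $|\cdot|_n$ the normalized absolute value of $K_n$, and $\|x\|=|x|_n^{1/m_n}$ for $x\in K_n$ (well defined on $K$). A function $\phi:K\to\mathbb C$ is positive definite if $\sum_{i,j}c_i\overline{c_j}\phi(\xi_i-\xi_j)\ge0$ for all finite families $\xi_i\in K$, $c_i\in\mathbb C$. *)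

From mathcomp Require Import all_boot all_order all_algebra.
From mathcomp Require Import complex.
From mathcomp Require Import boolp reals.
From mathcomp Require Import sequences exp.
Import Order.TTheory GRing.Theory Num.Theory.

Set Implicit Arguments.
Unset Strict Implicit.
Unset Printing Implicit Defensive.

Local Open Scope ring_scope.

Section Defs.
Variable K : fieldType.

Definition is_subfield (F : {pred K}) : Prop :=
  [/\ 0 \in F, 1 \in F,
      (forall x y, x \in F -> y \in F -> x - y \in F),
      (forall x y, x \in F -> y \in F -> x * y \in F) &
      (forall x, x \in F -> x != 0 -> x^-1 \in F)].

Definition is_normalized_dval (F : {pred K}) (v : K -> int) : Prop :=
  [/\ (forall x y, x \in F -> y \in F -> x != 0 -> y != 0 -> v (x * y) = v x + v y),
      (forall x y, x \in F -> y \in F -> x != 0 -> y != 0 -> x + y != 0 ->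
          Num.min (v x) (v y) <= v (x + y)) &
      (forall z : int, exists x, [/\ x \in F, x != 0 & v x = z])].

(* "x is in the valuation ideal of order >= N": x = 0 or v x >= N *)
Definition vge (v : K -> int) (N : int) (x : K) : Prop := x = 0 \/ N <= v x.

(* the residue field O/P of (F, v) has exactly q elements *)
Definition residue_card (F : {pred K}) (v : K -> int) (q : nat) : Prop :=
  exists r : 'I_q -> K,
    [/\ (forall i, r i \in F /\ vge v 0 (r i)),
        (forall i j, i != j -> ~ vge v 1 (r i - r j)) &
        (forall x, x \in F -> vge v 0 x -> exists i, vge v 1 (x - r i))].

Definition complete_wrt (F : {pred K}) (v : K -> int) : Prop :=
  forall u : nat -> K, (forall a, u a \in F) ->
    (forall N : int, exists M, forall a b, (M <= a)%N -> (M <= b)%N -> vge v N (u a - u b)) ->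
    exists2 l, l \in F & forall N : int, exists M, forall a, (M <= a)%N -> vge v N (u a - l).

Definition dim_over (F E : {pred K}) (m : nat) : Prop :=
  exists b : 'I_m -> K, (forall i, b i \in E) /\
    forall x, x \in E -> exists! c : 'I_m -> K,
      (forall i, c i \in F) /\ x = \sum_(i < m) c i * b i.

(* Tower data: Kn 0 = k is a non-Archimedean local field of characteristic 0
   (complete for a normalized discrete valuation v 0 with finite residue field
   of cardinality q 0); k = Kn 0 <= Kn 1 <= ... are finite extensions, Kn n of degree
   m n over k, Kn n carries its normalized discrete valuation v n (compatible with
   v (n-1): a positive multiple of it) with residue field of cardinality q n,
   and K (the whole type) is the union of the Kn n. *)
Definition local_tower (Kn : nat -> {pred K}) (v : nat -> K -> int)
  (q m : nat -> nat) : Prop :=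
  [/\ [pchar K] =i pred0,
      complete_wrt (Kn 0) (v 0),
      (forall n, is_subfield (Kn n) /\ {subset Kn n <= Kn n.+1}),
      (forall n, is_normalized_dval (Kn n) (v n) /\ residue_card (Kn n) (v n) (q n)) &
      [/\ (forall n, dim_over (Kn 0) (Kn n) (m n)),
      (forall n, exists2 e : int, 0 < e &
          forall x, x \in Kn n -> x != 0 -> v n.+1 x = e * v n x) &
      (forall x : K, exists n, x \in Kn n)]].

Variable R : realType.

Definition absn (v : K -> int) (q : nat) (x : K) : R :=
  if x == 0 then 0 else (q%:R : R) ^ (- v x).

Definition normK (Kn : nat -> {pred K}) (v : nat -> K -> int) (q m : nat -> nat)
  (x : K) : R :=
  match pselect (exists n, x \in Kn n) with
  | left H => let n := @ex_minn (fun n => x \in Kn n) H in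
              absn (v n) (q n) x `^ ((m n)%:R)^-1
  | right _ => 0
  end.

Definition rho (alpha s t : R) : R :=
  if 1 < s then expR (- (t * s `^ alpha)) else 1.

(* U is open in the inductive limit topology: U \cap K_n open in K_n for all n,
   K_n carrying its valuation topology *)
Definition open_ind (Kn : nat -> {pred K}) (v : nat -> K -> int) (U : K -> Prop) : Prop :=
  forall n x, x \in Kn n -> U x ->
    exists N : int, forall y, y \in Kn n -> vge (v n) N (y - x) -> U y.

Local Open Scope complex_scope.

Definition openC (V : R[i] -> Prop) : Prop :=
  forall z, V z -> exists2 e : R[i], 0 < e & forall w, `|w - z| < e -> V w.

Definition continuous_ind (Kn : nat -> {pred K}) (v : nat -> K -> int)
  (phi : K -> R[i]) : Prop :=
  forall V, openC V -> open_ind Kn v (fun x => V (phi x)).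

Definition positive_definite (phi : K -> R[i]) : Prop :=
  forall (N : nat) (xi : 'I_N -> K) (c : 'I_N -> R[i]),
    0 <= \sum_(i < N) \sum_(j < N) c i * (c j)^* * phi (xi i - xi j).

End Defs.


(* At level n, ||x|| is q_0 ^ (- v_n x / e_n), with e_n the ramification index
   of K_n over k; these expressions agree along the tower (and with
   |x|_n ^ (1/m_n)) thanks to the fundamental identity q_n ^ e_n = q_0 ^ m_n.
   The identity is obtained by reduction modulo a uniformizer pi_0 of k: a
   maximal family of integers of K_n whose reductions are free over the residue
   field of k is, by completeness of k, a basis of K_n over k, and counting
   O_n / pi_0 O_n through it and through pi_n-adic expansions gives both sides.
   Hence ||.|| is an ultrametric absolute value on K.  Since s |-> rho(s, t) is
   nonnegative and nonincreasing, rho(||xi_i - xi_j||, t) is a nonnegative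
   combination of the kernels [||xi_i - xi_j|| <= r], which by ultrametricity are
   indicators of equivalence relations, hence positive semidefinite.  Continuity
   holds because ||.|| is locally constant away from 0 and at most 1 near 0,
   where rho = 1. *)

From mathcomp Require Import all_boot all_order all_algebra.
From mathcomp Require Import complex.
From mathcomp Require Import boolp reals.
From mathcomp Require Import sequences exp.
From mathcomp Require Import zify ring lra.
Import Order.TTheory GRing.Theory Num.Theory.

Set Implicit Arguments.
Unset Strict Implicit.
Unset Printing Implicit Defensive.

Local Open Scope ring_scope.
Local Open Scope complex_scope.

(** * Subfields and discrete valuations *)

Section Subfield.
Variables (K : fieldType) (F : {pred K}).
Hypothesis hF : is_subfield F.

Lemma subf0 : 0 \in F. Proof. by case: hF. Qed.
Lemma subf1 : 1 \in F. Proof. by case: hF. Qed.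

Lemma subfB x y : x \in F -> y \in F -> x - y \in F.
Proof. by case: hF => _ _ + _ _; apply. Qed.

Lemma subfM x y : x \in F -> y \in F -> x * y \in F.
Proof. by case: hF => _ _ _ + _; apply. Qed.

Lemma subfV x : x \in F -> x^-1 \in F.
Proof.
case: hF => _ _ _ _ hV xF; have [->|x_neq0] := eqVneq x 0; last exact: hV.
by rewrite invr0 subf0.
Qed.

Lemma subfN x : x \in F -> - x \in F.
Proof. by move=> xF; rewrite -sub0r subfB ?subf0. Qed.

Lemma subfD x y : x \in F -> y \in F -> x + y \in F.
Proof. by move=> xF yF; rewrite -[y]opprK subfB ?subfN. Qed.

Lemma subf_div x y : x \in F -> y \in F -> x / y \in F.
Proof. by move=> xF yF; rewrite subfM ?subfV. Qed.

Lemma subfX x n : x \in F -> x ^+ n \in F.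
Proof. by move=> xF; elim: n => [|n IHn]; rewrite ?expr0 ?subf1 // exprS subfM. Qed.

Lemma subf_nat n : n%:R \in F.
Proof. by elim: n => [|n IHn]; rewrite ?subf0 // -addn1 natrD subfD ?subf1. Qed.

Lemma subf_sum (I : Type) (r : seq I) (P : pred I) (f : I -> K) :
  (forall i, P i -> f i \in F) -> \sum_(i <- r | P i) f i \in F.
Proof. by move=> fF; apply: (big_ind (fun x => x \in F)); [exact: subf0 | exact: subfD |]. Qed.

End Subfield.

Section Valuation.
Variables (K : fieldType) (F : {pred K}) (v : K -> int).
Hypotheses (hF : is_subfield F) (hv : is_normalized_dval F v).

Lemma dvalM x y : x \in F -> y \in F -> x != 0 -> y != 0 -> v (x * y) = v x + v y.
Proof. by case: hv => + _ _; apply. Qed.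

Lemma dval_surj z : exists x, [/\ x \in F, x != 0 & v x = z].
Proof. by case: hv. Qed.

Lemma dval1 : v 1 = 0.
Proof.
have := dvalM (subf1 hF) (subf1 hF) (oner_neq0 _) (oner_neq0 _).
by rewrite mulr1 => /eqP; rewrite -subr_eq subrr => /eqP.
Qed.

Lemma dvalN x : x \in F -> v (- x) = v x.
Proof.
move=> xF; have [->|x_neq0] := eqVneq x 0; first by rewrite oppr0.
have F_N1 : -1 \in F by rewrite subfN ?subf1.
have N1_neq0 : (-1 : K) != 0 by rewrite oppr_eq0 oner_neq0.
have vN1 : v (-1) = 0.
  by have := dvalM F_N1 F_N1 N1_neq0 N1_neq0; rewrite mulrNN mulr1 dval1; lia.
by rewrite -mulN1r dvalM // vN1 add0r.
Qed.

Lemma dvalV x : x \in F -> x != 0 -> v x^-1 = - v x.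
Proof.
move=> xF x_neq0; have := dvalM (subfV hF xF) xF (invr_neq0 x_neq0) x_neq0.
by rewrite mulVf // dval1; lia.
Qed.

Lemma dvalX x n : x \in F -> x != 0 -> v (x ^+ n) = v x *+ n.
Proof.
move=> xF x_neq0; elim: n => [|n IHn]; first by rewrite expr0 dval1.
by rewrite exprS dvalM ?subfX ?expf_neq0 // IHn mulrS.
Qed.

Lemma vge0 N : vge v N 0. Proof. by left. Qed.

Lemma vge_dval x : vge v (v x) x. Proof. by right. Qed.

Lemma vgeW M N x : M <= N -> vge v N x -> vge v M x.
Proof. by move=> MN [->|vx]; [left | right; apply: le_trans vx]. Qed.

Lemma vgeD N x y : x \in F -> y \in F -> vge v N x -> vge v N y -> vge v N (x + y).
Proof.
move=> xF yF [->|vx]; first by rewrite add0r.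
move=> [->|vy]; first by rewrite addr0; right.
have [->|x_neq0] := eqVneq x 0; first by rewrite add0r; right.
have [->|y_neq0] := eqVneq y 0; first by rewrite addr0; right.
have [|xy_neq0] := eqVneq (x + y) 0; first by left.
right; apply: le_trans (_ : Num.min (v x) (v y) <= _); first by rewrite le_min vx vy.
by case: hv => _ + _; apply.
Qed.

Lemma vgeN N x : x \in F -> vge v N x -> vge v N (- x).
Proof. by move=> xF [->|vx]; [left; rewrite oppr0 | right; rewrite dvalN]. Qed.

Lemma vgeB N x y : x \in F -> y \in F -> vge v N x -> vge v N y -> vge v N (x - y).
Proof. by move=> xF yF vx vy; apply: vgeD; rewrite ?subfN //; exact: vgeN. Qed.

Lemma vgeM N M x y : x \in F -> y \in F -> vge v N x -> vge v M y -> vge v (N + M) (x * y).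
Proof.
move=> xF yF [->|vx]; first by rewrite mul0r; left.
move=> [->|vy]; first by rewrite mulr0; left.
have [->|x_neq0] := eqVneq x 0; first by rewrite mul0r; left.
have [->|y_neq0] := eqVneq y 0; first by rewrite mulr0; left.
by right; rewrite dvalM // lerD.
Qed.

Lemma vge_sum (I : Type) (r : seq I) (P : pred I) (f : I -> K) N :
  (forall i, P i -> f i \in F /\ vge v N (f i)) -> vge v N (\sum_(i <- r | P i) f i).
Proof.
move=> hf; suff [] : (\sum_(i <- r | P i) f i \in F) /\ vge v N (\sum_(i <- r | P i) f i) by [].
apply: (big_ind (fun x => x \in F /\ vge v N x)) => //; first by split; [exact: subf0 | left].
by move=> x y [xF vx] [yF vy]; split; [exact: subfD | exact: vgeD].
Qed.

Lemma vge_mulK N c x : c \in F -> x \in F -> c != 0 -> vge v (N + v c) (c * x) -> vge v N x.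
Proof.
move=> cF xF c_neq0 vcx.
have := vgeM (subfV hF cF) (subfM hF cF xF) (vge_dval c^-1) vcx.
by rewrite mulKf // dvalV //; congr vge; lia.
Qed.

Lemma vge_all_eq0 x : (forall n : nat, vge v n%:Z x) -> x = 0.
Proof. by move=> vx; case: (vx `|v x|.+1) => // /le_trans/(_ (lez_abs _)); lia. Qed.

Lemma dval_eq0_vge x : vge v 0 x -> ~ vge v 1 x -> x != 0 /\ v x = 0.
Proof.
move=> [->|vx] Nvx; first by case: Nvx; left.
have x_neq0 : x != 0 by apply: contra_notN Nvx => /eqP ->; left.
by split=> //; apply/eqP; rewrite eq_le vx andbT leNgt; apply/negP => vx_gt0; apply: Nvx; right.
Qed.

Lemma dval_eq_vge x y : x \in F -> y \in F -> x != 0 ->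
  vge v (v x + 1) (y - x) -> v y = v x.
Proof.
move=> xF yF x_neq0 vyx.
have vxy : vge v (v x) y.
  rewrite -[y](subrK x); apply: vgeD; rewrite ?subfB //; last exact: vge_dval.
  by apply: vgeW vyx; rewrite lerDl.
have [y0|y_neq0] := eqVneq y 0.
  move: vyx; rewrite y0 sub0r => -[/eqP|]; first by rewrite oppr_eq0 (negPf x_neq0).
  by rewrite dvalN //; lia.
case: vxy => [/eqP|vy]; first by rewrite (negPf y_neq0).
have [vx_lt|vy_le] := ltP (v x) (v y); last by apply/eqP; rewrite eq_le vy_le vy.
have : vge v (v x + 1) x.
  rewrite [X in vge _ _ X](_ : x = y - (y - x)); last by ring.
  by apply: vgeB; rewrite ?subfB //; right; rewrite lezD1.
by case => [/eqP|]; [rewrite (negPf x_neq0) | rewrite lezD1 ltxx].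
Qed.

Lemma residue_gt1 q (r : 'I_q -> K) :
  (forall i, r i \in F) ->
  (forall x, x \in F -> vge v 0 x -> exists i, vge v 1 (x - r i)) -> (1 < q)%N.
Proof.
move=> rF r_cover; have [i0 vi0] := r_cover 0 (subf0 hF) (vge0 0).
have [i1 vi1] : exists i, vge v 1 (1 - r i) by apply: r_cover (subf1 hF) _; right; rewrite dval1.
rewrite ltnNge; apply/negP => q_le1.
have i10 : i1 = i0 by apply: ord_inj; have := ltn_ord i0; have := ltn_ord i1; lia.
move: vi1; rewrite i10 => /(vgeB (subfB hF (subf1 hF) (rF _)) (subfB hF (subf0 hF) (rF _)))/(_ vi0).
rewrite (_ : 1 - r i0 - (0 - r i0) = 1); last by ring.
by case => [/eqP|]; [rewrite oner_eq0 | rewrite dval1].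
Qed.

End Valuation.

(** * The fundamental identity *)

Section Coordinates.
Variables (K : fieldType) (k : {pred K}).
Hypothesis hk : is_subfield k.

Definition free_over n (y : 'I_n -> K) :=
  forall c : 'I_n -> K, (forall i, c i \in k) -> \sum_i c i * y i = 0 -> forall i, c i = 0.

Definition span_over (L : {pred K}) n (y : 'I_n -> K) :=
  forall x, x \in L -> exists c : 'I_n -> K, (forall i, c i \in k) /\ x = \sum_i c i * y i.

Lemma sum_delta n (f : 'I_n -> K) i : \sum_l (i == l)%:R * f l = f i.
Proof.
rewrite (bigD1 i) //= eqxx mul1r big1 ?addr0 // => l /negPf.
by rewrite eq_sym => ->; rewrite mul0r.
Qed.

Lemma coord_mulmx1 p n (u : 'I_p -> K) (z : 'I_n -> K) (A : 'M_(p, n)) (B : 'M_(n, p)) :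
  free_over u -> (forall i j, A i j \in k) -> (forall j l, B j l \in k) ->
  (forall i, u i = \sum_j A i j * z j) -> (forall j, z j = \sum_l B j l * u l) ->
  A *m B = 1%:M.
Proof.
move=> u_free Ak Bk uAz zBu; apply/matrixP => i l; rewrite [in RHS]mxE.
apply/eqP; rewrite -subr_eq0; apply/eqP.
apply: (u_free (fun l => (A *m B) i l - (i == l)%:R)) => [l'|].
  by rewrite subfB ?subf_nat ?mxE ?subf_sum // => j _; rewrite subfM.
under eq_bigr do rewrite mulrBl mxE mulr_suml.
rewrite sumrB sum_delta exchange_big /= [u i]uAz; apply/eqP; rewrite subr_eq0; apply/eqP.
by apply: eq_bigr => j _; rewrite zBu mulr_sumr; apply: eq_bigr => l' _; rewrite mulrA.
Qed.

Lemma span_over_mx (L : {pred K}) n p (u : 'I_n -> K) (b : 'I_p -> K) :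
  span_over L b -> (forall i, u i \in L) ->
  exists2 A : 'M_(n, p), (forall i j, A i j \in k) & forall i, u i = \sum_j A i j * b j.
Proof.
move=> b_span uL; have [A /all_and2[Ak uAb]] := choice (fun i => b_span _ (uL i)).
by exists (\matrix_(i, j) A i j) => [i j|i]; rewrite ?mxE //; under eq_bigr do rewrite mxE.
Qed.

Lemma free_span_card_eq (L : {pred K}) n p (y : 'I_n -> K) (b : 'I_p -> K) :
  free_over y -> free_over b -> (forall i, y i \in L) -> (forall j, b j \in L) ->
  span_over L y -> span_over L b -> n = p.
Proof.
move=> y_free b_free yL bL y_span b_span.
have [C Ck yCb] := span_over_mx b_span yL.
have [D Dk bDy] := span_over_mx y_span bL.
apply/eqP; rewrite eqn_leq (mulmx1_min (coord_mulmx1 y_free Ck Dk yCb bDy)).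
exact: (mulmx1_min (coord_mulmx1 b_free Dk Ck bDy yCb)).
Qed.

Lemma dim_over_basis (L : {pred K}) m : 0 \in L -> dim_over k L m ->
  exists2 b : 'I_m -> K, (forall i, b i \in L) & free_over b /\ span_over L b.
Proof.
move=> L0 [b [bL b_coord]]; exists b => //; split=> [c ck cb0 i|x xL].
  have [c0 [_ c0_uniq]] := b_coord 0 L0.
  suff -> : c = fun=> 0 by [].
  rewrite -(c0_uniq c) //; apply: c0_uniq.
  by split=> [j|]; rewrite ?subf0 // big1 // => j _; rewrite mul0r.
by have [c [? _]] := b_coord x xL; exists c.
Qed.

End Coordinates.

Section FundamentalIdentity.
Variables (K : fieldType) (k L : {pred K}) (v0 w : K -> int) (q Q m E : nat).
Hypotheses (hk : is_subfield k) (hL : is_subfield L).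
Hypotheses (hv0 : is_normalized_dval k v0) (hw : is_normalized_dval L w).
Hypotheses (sub_kL : {subset k <= L}) (E_gt0 : (0 < E)%N).
Hypothesis w_k : forall x, x \in k -> x != 0 -> w x = E%:Z * v0 x.
Hypothesis k_complete : complete_wrt k v0.
Variables (pi0 pi : K) (rk : 'I_q -> K) (rL : 'I_Q -> K).
Hypotheses (pi0_k : pi0 \in k) (pi0_neq0 : pi0 != 0) (v0_pi0 : v0 pi0 = 1).
Hypotheses (pi_L : pi \in L) (pi_neq0 : pi != 0) (w_pi : w pi = 1).
Hypotheses (rk_int : forall i, rk i \in k /\ vge v0 0 (rk i))
  (rk_inj : forall i j, i != j -> ~ vge v0 1 (rk i - rk j))
  (rk_cover : forall x, x \in k -> vge v0 0 x -> exists i, vge v0 1 (x - rk i)).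
Hypotheses (rL_int : forall i, rL i \in L /\ vge w 0 (rL i))
  (rL_inj : forall i j, i != j -> ~ vge w 1 (rL i - rL j))
  (rL_cover : forall x, x \in L -> vge w 0 x -> exists i, vge w 1 (x - rL i)).

Lemma vge_k_w N x : x \in k -> vge v0 N x -> vge w (E%:Z * N) x.
Proof.
move=> xk [->|vx]; first by left.
have [->|x_neq0] := eqVneq x 0; first by left.
by right; rewrite w_k // ler_pM2l // ltz_nat.
Qed.

Lemma w_pi0 : w pi0 = E. Proof. by rewrite w_k // v0_pi0 mulr1. Qed.

Lemma kLM c x : c \in k -> x \in L -> c * x \in L.
Proof. by move=> ck xL; apply: subfM => //; exact: sub_kL. Qed.

Definition OL x := x \in L /\ vge w 0 x.

Lemma OL_k c : c \in k -> vge v0 0 c -> OL c.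
Proof. by move=> ck vc; split; [exact: sub_kL | have := vge_k_w ck vc; rewrite mulr0]. Qed.

Lemma OL_pi : OL pi. Proof. by split=> //; right; rewrite w_pi. Qed.

Lemma OLM x y : OL x -> OL y -> OL (x * y).
Proof. by move=> [xL vx] [yL vy]; split; [exact: subfM | have := vgeM hw xL yL vx vy]. Qed.

Lemma OLX x n : OL x -> OL (x ^+ n).
Proof.
move=> Ox; elim: n => [|n IHn]; last by rewrite exprS; apply: OLM.
by split; [exact: subf1 | right; rewrite (dval1 hL hw)].
Qed.

Lemma OL_sum (I : finType) (P : pred I) (f : I -> K) :
  (forall i, P i -> OL (f i)) -> OL (\sum_(i | P i) f i).
Proof.
move=> Of; split; first by apply: (subf_sum hL) => i /Of [].
by apply: (vge_sum hL hw) => i /Of.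
Qed.

(* [eqm x y] is the congruence modulo [pi0 O_L = pi^E O_L]. *)
Definition eqm x y := vge w E%:Z (x - y).

Lemma eqm_trans x y z : x \in L -> y \in L -> z \in L -> eqm x y -> eqm y z -> eqm x z.
Proof.
move=> xL yL zL exy eyz; rewrite /eqm -(subrK y x) -addrA.
by apply: (vgeD hw); rewrite ?subfB ?subfD.
Qed.

Lemma eqm_sym x y : x \in L -> y \in L -> eqm x y -> eqm y x.
Proof. by move=> xL yL exy; rewrite /eqm -opprB; apply: (vgeN hL hw); rewrite ?subfB. Qed.

Lemma card_le_eqm (A B : finType) (f : A -> K) (g : B -> K) :
  (forall a, OL (f a)) -> (forall b, OL (g b)) ->
  (forall a, exists b, eqm (f a) (g b)) -> (forall a a', eqm (f a) (f a') -> a = a') ->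
  (#|A| <= #|B|)%N.
Proof.
move=> Of Og g_cover f_inj; have [h fh] := choice g_cover.
apply: (@leq_card _ _ h) => a a' haa'; apply: f_inj.
apply: eqm_trans (fh a) _; rewrite ?(Of _).1 ?(Og _).1 // haa'.
by apply: eqm_sym; rewrite ?(Of _).1 ?(Og _).1.
Qed.

Lemma pi_digits_eq0 j (d : 'I_j -> K) :
  (forall t, OL (d t) /\ (vge w 1 (d t) -> d t = 0)) ->
  vge w j%:Z (\sum_(t < j) d t * pi ^+ t) -> forall t, d t = 0.
Proof.
elim: j d => [|j IHj] d d_digit vd t; first by case: t.
set T := \sum_(t < j) d (lift ord0 t) * pi ^+ t.
have OT : OL T by apply: OL_sum => i _; apply: OLM; [exact: (d_digit _).1 | exact: OLX OL_pi].
have dE : \sum_(t < j.+1) d t * pi ^+ t = d ord0 + pi * T.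
  rewrite big_ord_recl expr0 mulr1 mulr_sumr; congr (_ + _); apply: eq_bigr => i _.
  by rewrite exprS mulrCA.
have [[d0L _] d0_digit] := d_digit ord0.
have vpiT : vge w 1 (pi * T) by have := vgeM hw pi_L OT.1 (vge_dval _ _) OT.2; rewrite w_pi addr0.
have d00 : d ord0 = 0.
  apply: d0_digit; rewrite -(addrK (pi * T) (d ord0)).
  apply: (vgeB hL hw) => //; rewrite ?subfD ?subfM //; try exact: OT.1.
  by rewrite -dE; apply: vgeW vd; rewrite lez_nat.
have vT : vge w j%:Z T.
  apply: (vge_mulK hL hw pi_L OT.1 pi_neq0); rewrite w_pi.
  by congr vge: vd; [lia | rewrite dE d00 add0r].
have := IHj (fun t => d (lift ord0 t)) (fun t => d_digit (lift ord0 t)) vT.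
by case: (unliftP ord0 t) => [t'|] -> //; apply.
Qed.

Lemma pi_expansion_approx j x : OL x ->
  exists d : 'I_j -> 'I_Q, vge w j%:Z (x - \sum_(t < j) rL (d t) * pi ^+ t).
Proof.
elim: j x => [|j IHj] x [xL vx].
  by have [i _] := rL_cover xL vx; exists (fun=> i); rewrite big_ord0 subr0.
have [i0 vxi0] := rL_cover xL vx.
set x' := (x - rL i0) / pi.
have x'E : x - rL i0 = pi * x' by rewrite /x' mulrC divfK.
have x'L : x' \in L by rewrite subf_div ?subfB //; exact: (rL_int i0).1.
have vx' : vge w 0 x'.
  by apply: (vge_mulK hL hw pi_L x'L pi_neq0); rewrite w_pi add0r -x'E.
have [d' vd'] := IHj x' (conj x'L vx').
exists (fun t => oapp d' i0 (unlift ord0 t)).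
rewrite big_ord_recl /= unlift_none expr0 mulr1.
set S := \sum_(t < j) rL (d' t) * pi ^+ t.
have -> : \sum_(i < j) rL (oapp d' i0 (unlift ord0 (lift ord0 i))) * pi ^+ bump 0 i = pi * S.
  by rewrite mulr_sumr; apply: eq_bigr => i _; rewrite liftK exprS mulrCA.
have SL : S \in L by apply: (subf_sum hL) => t _; rewrite subfM ?subfX //; exact: (rL_int _).1.
rewrite opprD addrA x'E -mulrBr.
have := vgeM hw pi_L (subfB hL x'L SL) (vge_dval _ _) vd'; rewrite w_pi; congr vge; lia.
Qed.

Definition pi_expansion (d : {ffun 'I_E -> 'I_Q}) := \sum_(t < E) rL (d t) * pi ^+ t.

Lemma pi_expansion_OL d : OL (pi_expansion d).
Proof. by apply: OL_sum => t _; apply: OLM; [exact: rL_int | exact: OLX OL_pi]. Qed.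

Lemma pi_expansion_inj d d' : eqm (pi_expansion d) (pi_expansion d') -> d = d'.
Proof.
move=> edd'.
have rL_eq t : rL (d t) - rL (d' t) = 0.
  apply: (@pi_digits_eq0 E (fun t => rL (d t) - rL (d' t))).
    move=> {}t; have [dL vd] := rL_int (d t); have [d'L vd'] := rL_int (d' t).
    split; first by split; [rewrite subfB | exact: (vgeB hL hw)].
    by have [->|/rL_inj] := eqVneq (d t) (d' t); [rewrite subrr | ].
  by move: edd'; rewrite /eqm -sumrB; under eq_bigr do rewrite -mulrBl.
apply/ffunP => t; have [//|/rL_inj] := eqVneq (d t) (d' t).
by rewrite rL_eq => /(_ (vge0 _ _)).
Qed.

Lemma pi_expansion_cover x : OL x -> exists d, eqm x (pi_expansion d).
Proof.
move=> Ox; have [d vd] := pi_expansion_approx E Ox.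
by exists [ffun t => d t]; rewrite /eqm /pi_expansion; under eq_bigr do rewrite ffunE.
Qed.

(* [res_free y]: the reductions of the [y i] modulo [pi0 O_L] are linearly
   independent over the residue field of [k]. *)
Definition res_free N (y : 'I_N -> K) := (forall i, OL (y i)) /\
  forall c : 'I_N -> K, (forall i, c i \in k /\ vge v0 0 (c i)) ->
    eqm (\sum_i c i * y i) 0 -> forall i, vge v0 1 (c i).

Definition res_comb N (y : 'I_N -> K) (a : {ffun 'I_N -> 'I_q}) := \sum_i rk (a i) * y i.

Lemma res_comb_OL N (y : 'I_N -> K) a : (forall i, OL (y i)) -> OL (res_comb y a).
Proof. by move=> Oy; apply: OL_sum => i _; apply: OLM => //; apply: OL_k; case: (rk_int (a i)). Qed.

Lemma res_comb_inj N (y : 'I_N -> K) a a' :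
  res_free y -> eqm (res_comb y a) (res_comb y a') -> a = a'.
Proof.
move=> [_ y_free] eaa'.
have rk_eq : forall i, vge v0 1 (rk (a i) - rk (a' i)).
  apply: y_free => [i|].
    have [ak va] := rk_int (a i); have [a'k va'] := rk_int (a' i).
    by split; [rewrite subfB | exact: (vgeB hk hv0)].
  by move: eaa'; rewrite /eqm subr0 -sumrB; under eq_bigr do rewrite -mulrBl.
by apply/ffunP => i; have [//|/rk_inj] := eqVneq (a i) (a' i).
Qed.

Lemma res_free_card_le N (y : 'I_N -> K) : res_free y -> (q ^ N <= Q ^ E)%N.
Proof.
move=> y_free; have := @card_le_eqm _ _ (res_comb y) pi_expansion.
rewrite !card_ffun !card_ord; apply=> [a|||].
- exact: res_comb_OL y_free.1.
- exact: pi_expansion_OL.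
- by move=> a; apply: pi_expansion_cover; exact: res_comb_OL y_free.1.
- by move=> a a'; apply: res_comb_inj.
Qed.

Lemma q_gt1 : (1 < q)%N.
Proof. exact: (residue_gt1 hk hv0 (fun i => (rk_int i).1) rk_cover). Qed.

Lemma eqm_res_comb N (y : 'I_N -> K) (e : 'I_N -> K) :
  (forall i, OL (y i)) -> (forall i, e i \in k /\ vge v0 0 (e i)) ->
  exists a, eqm (\sum_i e i * y i) (res_comb y a).
Proof.
move=> Oy Oe; have [a ea] := choice (fun i => rk_cover (Oe i).1 (Oe i).2).
exists [ffun i => a i]; rewrite /eqm /res_comb -sumrB.
apply: (vge_sum hL hw) => i _; rewrite ffunE -mulrBl.
have dk : e i - rk (a i) \in k by rewrite subfB //; [exact: (Oe i).1 | exact: (rk_int _).1].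
split; first exact: kLM dk (Oy i).1.
by have := vgeM hw (sub_kL dk) (Oy i).1 (vge_k_w dk (ea i)) (Oy i).2; rewrite mulr1 addr0.
Qed.

Lemma eqm_res_comb_unit N (y : 'I_N -> K) x c0 (c : 'I_N -> K) :
  (forall i, OL (y i)) -> x \in L -> c0 \in k -> c0 != 0 -> v0 c0 = 0 ->
  (forall i, c i \in k /\ vge v0 0 (c i)) ->
  eqm (c0 * x + \sum_i c i * y i) 0 -> exists a, eqm x (res_comb y a).
Proof.
move=> Oy xL c0k c0_neq0 v0c0 Oc e0.
have vc0V : vge v0 0 c0^-1 by right; rewrite (dvalV hk hv0) // v0c0.
pose e i := - c i / c0.
have Oe i : e i \in k /\ vge v0 0 (e i).
  have [cik vci] := Oc i; split; first by rewrite subf_div ?subfN.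
  by have := vgeM hv0 (subfN hk cik) (subfV hk c0k) (vgeN hk hv0 cik vci) vc0V.
have [a ea] := eqm_res_comb Oy Oe.
have sL : \sum_i c i * y i \in L.
  by apply: (subf_sum hL) => i _; apply: kLM (Oc i).1 (Oy i).1.
have seL : \sum_i e i * y i \in L.
  by apply: (subf_sum hL) => i _; apply: kLM (Oe i).1 (Oy i).1.
exists a; apply: eqm_trans ea => //; first exact: (res_comb_OL a Oy).1.
rewrite /eqm.
have -> : x - \sum_i e i * y i = c0^-1 * (c0 * x + \sum_i c i * y i - 0).
  rewrite subr0 mulrDr mulKf // mulr_sumr -sumrN; congr (_ + _); apply: eq_bigr => i _.
  by rewrite /e mulNr mulNr opprK mulrAC mulrC.
have := vgeM hw (sub_kL (subfV hk c0k)) _ (vge_k_w (subfV hk c0k) vc0V) e0.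
by rewrite mulr0 add0r; apply; rewrite subr0 subfD ?kLM.
Qed.

Definition extend N (y : 'I_N -> K) z : 'I_N.+1 -> K := fun t => oapp y z (unlift ord0 t).

Lemma sum_extend N (y : 'I_N -> K) z (c : 'I_N.+1 -> K) :
  \sum_t c t * extend y z t = c ord0 * z + \sum_i c (lift ord0 i) * y i.
Proof. by rewrite big_ord_recl /extend unlift_none; under eq_bigr do rewrite liftK. Qed.

Lemma res_free_extend N (y : 'I_N -> K) x : res_free y -> OL x ->
  (forall a, ~ eqm x (res_comb y a)) -> res_free (extend y x).
Proof.
move=> [Oy y_free] Ox x_new; split=> [t|c Oc]; first by rewrite /extend; case: unlift.
rewrite sum_extend => e0; have [c0k vc0] := Oc ord0.
have c0P : vge v0 1 (c ord0).
  apply: contrapT => Nc0; have [c0_neq0 v0c0] := dval_eq0_vge vc0 Nc0.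
  have [a] := eqm_res_comb_unit Oy Ox.1 c0k c0_neq0 v0c0 (fun i => Oc (lift ord0 i)) e0.
  exact: x_new.
have c0xL : c ord0 * x \in L := kLM c0k Ox.1.
have sL : \sum_i c (lift ord0 i) * y i \in L.
  by apply: (subf_sum hL) => i _; apply: kLM (Oc _).1 (Oy i).1.
have vc0x : vge w E%:Z (c ord0 * x).
  by have := vgeM hw (sub_kL c0k) Ox.1 (vge_k_w c0k c0P) Ox.2; rewrite mulr1 addr0.
have e_tail : eqm (\sum_i c (lift ord0 i) * y i) 0.
  move: e0; rewrite /eqm !subr0 => e0.
  rewrite -(addKr (c ord0 * x) (\sum_i _)); apply: (vgeD hw); rewrite ?subfN ?subfD //.
  exact: (vgeN hL hw).
move=> t; case: (unliftP ord0 t) => [t'|] -> //.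
exact: y_free (fun i => Oc (lift ord0 i)) e_tail t'.
Qed.

Lemma exists_maximal_res_free :
  exists N (y : 'I_N -> K), res_free y /\ forall x, OL x -> ~ res_free (extend y x).
Proof.
pose P n := `[< exists y : 'I_n -> K, res_free y >].
have P0 : exists n, P n.
  by exists 0%N; apply/asboolP; exists (fun=> 0); split=> [[]|c _ _ []].
have P_bound n : P n -> (n <= Q ^ E)%N.
  move=> /asboolP[y /res_free_card_le]; apply: leq_trans.
  exact: ltnW (ltn_expl _ q_gt1).
case: (ex_maxnP P0 P_bound) => N /asboolP[y y_free] y_max.
exists N, y; split=> // x Ox yx_free.
by have /y_max := asboolT (ex_intro _ _ yx_free : exists y, res_free y); rewrite ltnn.
Qed.

Lemma maximal_res_free_cover N (y : 'I_N -> K) : res_free y ->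
  (forall x, OL x -> ~ res_free (extend y x)) ->
  forall x, OL x -> exists a, eqm x (res_comb y a).
Proof.
move=> y_free y_max x Ox; apply: contrapT => x_new; apply: (y_max x Ox).
by apply: res_free_extend => // a ea; apply: x_new; exists a.
Qed.

(* Divide by a coefficient of least valuation: the resulting relation has a
   unit coefficient, which residual freeness forbids. *)
Lemma res_free_free N (y : 'I_N -> K) : res_free y -> free_over k y.
Proof.
move=> [_ y_free] c ck cy0 i; apply/eqP; apply: contraT => ci_neq0.
case: (@arg_minP _ _ _ i [pred j | c j != 0] (fun j => v0 (c j)) ci_neq0) => j /= cj_neq0 cj_min.
pose c' l := c l / c j.
have Oc' l : c' l \in k /\ vge v0 0 (c' l).
  split; first by rewrite subf_div.
  rewrite /c'; have [->|cl_neq0] := eqVneq (c l) 0; first by rewrite mul0r; left.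
  right; rewrite (dvalM hv0) ?subfV ?invr_eq0 // (dvalV hk hv0) // subr_ge0.
  exact: cj_min.
have : eqm (\sum_l c' l * y l) 0.
  have -> : \sum_l c' l * y l = (c j)^-1 * \sum_l c l * y l.
    by rewrite mulr_sumr; apply: eq_bigr => l _; rewrite /c' mulrAC mulrC.
  by rewrite /eqm cy0 mulr0 subr0; left.
move=> /(y_free c' Oc')/(_ j); rewrite /c' divff //.
by case=> [/eqP|]; [rewrite oner_eq0 | rewrite (dval1 hk hv0)].
Qed.

Section Span.
Variables (N : nat) (y : 'I_N -> K) (digits : K -> {ffun 'I_N -> 'I_q}).
Hypotheses (y_free : res_free y)
  (digitsP : forall x, OL x -> eqm x (res_comb y (digits x))).

Definition shift x := (x - res_comb y (digits x)) / pi0.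

Lemma shiftE x : x = res_comb y (digits x) + pi0 * shift x.
Proof. by rewrite /shift mulrC divfK // addrC subrK. Qed.

Lemma shift_OL x : OL x -> OL (shift x).
Proof.
move=> Ox; have rcL := (res_comb_OL (digits x) y_free.1).1.
have sL : shift x \in L by rewrite subf_div ?subfB ?(sub_kL pi0_k) //; exact: Ox.1.
split=> //; apply: (vge_mulK hL hw (sub_kL pi0_k) sL pi0_neq0).
by rewrite w_pi0 add0r /shift mulrC divfK //; exact: digitsP.
Qed.

Variable x : K.
Hypothesis Ox : OL x.

Definition rem n := iter n shift x.

Definition coef n i := \sum_(0 <= t < n) pi0 ^+ t * rk (digits (rem t) i).

Lemma rem_OL n : OL (rem n).
Proof. by elim: n => [|n IHn] //; exact: shift_OL. Qed.

Lemma coef_k n i : coef n i \in k.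
Proof. by apply: (subf_sum hk) => t _; rewrite subfM ?subfX //; exact: (rk_int _).1. Qed.

Lemma coef_approx n : x = \sum_i coef n i * y i + pi0 ^+ n * rem n.
Proof.
elim: n => [|n IHn].
  by rewrite expr0 mul1r big1 ?add0r // => i _; rewrite /coef big_geq ?mul0r.
have -> : \sum_i coef n.+1 i * y i =
    \sum_i coef n i * y i + pi0 ^+ n * res_comb y (digits (rem n)).
  rewrite /res_comb mulr_sumr -big_split /=; apply: eq_bigr => i _.
  by rewrite /coef big_nat_recr //= mulrDl mulrA.
have remS : rem n.+1 = shift (rem n) by [].
by rewrite {1}IHn {1}[rem n]shiftE remS exprSr; ring.
Qed.

Lemma coef_tail i a c : (a <= c)%N -> vge v0 a%:Z (coef c i - coef a i).
Proof.
move=> ac; rewrite /coef (big_cat_nat (leq0n a) ac) /= addrC addrK big_nat_cond.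
apply: (vge_sum hk hv0) => t /andP[/andP[a_le_t _] _].
have [rkk vrk] := rk_int (digits (rem t) i).
split; first by rewrite subfM ?subfX.
have := vgeM hv0 (subfX hk t pi0_k) rkk (vge_dval _ _) vrk.
rewrite (dvalX hk hv0) // v0_pi0 addr0; apply: vgeW; rewrite -natz; lia.
Qed.

Lemma coef_cauchy i Nz :
  exists M, forall a c, (M <= a)%N -> (M <= c)%N -> vge v0 Nz (coef a i - coef c i).
Proof.
exists `|Nz|%N => a c Ma Mc.
have Nz_le n : (`|Nz| <= n)%N -> Nz <= n%:Z.
  by move=> Mn; have := lez_abs Nz; rewrite -lez_nat in Mn; lia.
have [ac|ca] := leqP a c; last exact: vgeW (Nz_le _ Mc) (coef_tail i (ltnW ca)).
rewrite -opprB; apply: (vgeN hk hv0); first by rewrite subfB ?coef_k.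
exact: vgeW (Nz_le _ Ma) (coef_tail i ac).
Qed.

Lemma res_free_span_OL : exists A : 'I_N -> K, (forall i, A i \in k) /\ x = \sum_i A i * y i.
Proof.
have coef_lim i : exists l, l \in k /\
    forall Nz : int, exists M, forall a, (M <= a)%N -> vge v0 Nz (coef a i - l).
  by have [l lk hl] := k_complete (fun n => coef_k n i) (coef_cauchy i); exists l.
have [A /all_and2[Ak A_lim]] := choice coef_lim.
exists A; split=> //; apply/eqP; rewrite -subr_eq0; apply/eqP.
apply: (@vge_all_eq0 _ w) => n.
have [M hM] := choice (fun i => A_lim i n%:Z).
set n' := (n + \max_i M i)%N.
have yL i : y i \in L := (y_free.1 i).1.
have dk i : coef n' i - A i \in k by rewrite subfB ?coef_k.
have -> : x - \sum_i A i * y i = pi0 ^+ n' * rem n' + \sum_i (coef n' i - A i) * y i.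
  under [X in _ = _ + X]eq_bigr do rewrite mulrBl.
  by rewrite sumrB {1}(coef_approx n'); ring.
have pi0n'_k : pi0 ^+ n' \in k by rewrite subfX.
apply: (vgeD hw); first exact: kLM (rem_OL _).1.
- by apply: (subf_sum hL) => i _; apply: kLM.
- have := vgeM hw (sub_kL pi0n'_k) (rem_OL n').1 (vge_k_w pi0n'_k (vge_dval _ _)) (rem_OL n').2.
  rewrite (dvalX hk hv0) // v0_pi0 addr0; apply: vgeW.
  by have := E_gt0; rewrite /n' -natz; nia.
- apply: (vge_sum hL hw) => i _; split; first exact: kLM.
  have Mi : (M i <= n')%N by rewrite /n' (leq_trans (leq_bigmax i)) ?leq_addl.
  have := vgeM hw (sub_kL (dk i)) (yL i) (vge_k_w (dk i) (hM i n' Mi)) (y_free.1 i).2.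
  by rewrite addr0; apply: vgeW; have := E_gt0; rewrite -natz; nia.
Qed.

End Span.

Lemma maximal_res_free_span N (y : 'I_N -> K) : res_free y ->
  (forall z, OL z -> exists a, eqm z (res_comb y a)) -> span_over k L y.
Proof.
move=> y_free y_cover.
have digits_ex z : exists a, OL z -> eqm z (res_comb y a).
  have [/y_cover[a ea]|nOz] := pselect (OL z); first by exists a.
  by exists [ffun=> Ordinal (ltnW q_gt1)].
have [digits digitsP] := choice digits_ex.
move=> x xL; set s := `|w x|%N.
have ps_k : pi0 ^+ s \in k by rewrite subfX.
have ps_neq0 : pi0 ^+ s != 0 by rewrite expf_neq0.
have Opsx : OL (pi0 ^+ s * x).
  split; first exact: kLM.
  have [->|x_neq0] := eqVneq x 0; first by rewrite mulr0; left.
  right; rewrite (dvalM hw) ?(sub_kL ps_k) // w_k // (dvalX hk hv0) // v0_pi0.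
  by have := lez_abs (w x); rewrite /s -natz; have := E_gt0; nia.
have [A [Ak xA]] := res_free_span_OL y_free digitsP Opsx.
exists (fun i => A i / pi0 ^+ s); split=> [i|]; first by rewrite subf_div.
rewrite -[x](mulKf ps_neq0) xA mulr_sumr; apply: eq_bigr => i _.
by rewrite mulrA [_^-1 * _]mulrC.
Qed.

Theorem fundamental_identity : dim_over k L m -> (Q ^ E = q ^ m)%N.
Proof.
move=> L_dim; have [N [y [y_free y_max]]] := exists_maximal_res_free.
have y_cover := maximal_res_free_cover y_free y_max.
have [b bL [b_free b_span]] := dim_over_basis hk (subf0 hL) L_dim.
have <- : N = m.
  apply: (free_span_card_eq hk (res_free_free y_free) b_free _ bL _ b_span).
    by move=> i; exact: (y_free.1 i).1.
  exact: maximal_res_free_span.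
apply/eqP; rewrite eqn_leq (res_free_card_le y_free) andbT.
have := @card_le_eqm _ _ pi_expansion (res_comb y); rewrite !card_ffun !card_ord; apply.
- exact: pi_expansion_OL.
- by move=> a; apply: res_comb_OL y_free.1.
- by move=> d; apply: y_cover; exact: pi_expansion_OL.
- by move=> d d'; apply: pi_expansion_inj.
Qed.

End FundamentalIdentity.

(** * The absolute value on the tower *)

Section Tower.
Variables (K : fieldType) (Kn : nat -> {pred K}) (v : nat -> K -> int) (q m : nat -> nat).
Hypothesis ht : local_tower Kn v q m.

Lemma tower_subfield n : is_subfield (Kn n). Proof. by case: ht => _ _ /(_ n)[]. Qed.
Lemma tower_dval n : is_normalized_dval (Kn n) (v n). Proof. by case: ht => _ _ _ /(_ n)[]. Qed.
Lemma tower_cover x : exists n, x \in Kn n. Proof. by case: ht => _ _ _ _ []. Qed.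

Lemma tower_subW a b : (a <= b)%N -> {subset Kn a <= Kn b}.
Proof.
move=> /subnK <-; elim: (b - a)%N => [|d IHd] x xa; first by rewrite add0n.
by rewrite addSn; case: ht => _ _ /(_ (d + a)%N)[_ ->] //; exact: IHd.
Qed.

Lemma tower_ram_step n : exists e : nat, (0 < e)%N /\
  forall x, x \in Kn n -> x != 0 -> v n.+1 x = e%:Z * v n x.
Proof.
case: ht => _ _ _ _ [_ /(_ n)[e e_gt0 ve] _].
by exists `|e|%N; split=> [|x xn x_neq0]; [lia | rewrite ve // gez0_abs // ltW].
Qed.

Definition ram_step : nat -> nat := projT1 (choice tower_ram_step).

Lemma ram_stepP n : (0 < ram_step n)%N /\
  forall x, x \in Kn n -> x != 0 -> v n.+1 x = (ram_step n)%:Z * v n x.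
Proof. exact: (projT2 (choice tower_ram_step) n). Qed.

(* The ramification index of [Kn n] over [k = Kn 0]. *)
Definition ram n := (\prod_(i < n) ram_step i)%N.

Lemma ramS n : ram n.+1 = (ram n * ram_step n)%N. Proof. by rewrite /ram big_ord_recr. Qed.

Lemma ram_gt0 n : (0 < ram n)%N.
Proof.
elim: n => [|n IHn]; first by rewrite /ram big_ord0.
by rewrite ramS muln_gt0 IHn (ram_stepP n).1.
Qed.

Lemma tower_dval0 n x : x \in Kn 0 -> x != 0 -> v n x = (ram n)%:Z * v 0 x.
Proof.
move=> x0 x_neq0; elim: n => [|n IHn]; first by rewrite /ram big_ord0 mul1r.
by rewrite (ram_stepP n).2 ?(tower_subW (leq0n n)) // IHn ramS PoszM mulrCA mulrA.
Qed.

Lemma tower_deg_gt0 n : (0 < m n)%N.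
Proof.
case: ht => _ _ _ _ [/(_ n)[b [_ b_coord]] _ _].
have [c [[_ c1] _]] := b_coord 1 (subf1 (tower_subfield n)).
rewrite lt0n; apply/eqP => mn0; move: c1; rewrite big1 => [/eqP|i _].
  by rewrite oner_eq0.
by have := ltn_ord i; rewrite {2}mn0.
Qed.

Lemma tower_residue_gt1 n : (1 < q n)%N.
Proof.
case: ht => _ _ _ /(_ n)[hv [r [rF _ r_cover]]] _.
exact: (residue_gt1 (tower_subfield n) hv (fun i => (rF i).1) r_cover).
Qed.

Lemma tower_fundamental_identity n : (q n ^ ram n = q 0 ^ m n)%N.
Proof.
have [pi0 [pi0_k pi0_neq0 v0_pi0]] := dval_surj (tower_dval 0) 1.
have [pi [pi_n pi_neq0 vn_pi]] := dval_surj (tower_dval n) 1.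
case: ht => _ k_complete _ rc [dim _ _].
have [_ [r0 [r0_int r0_inj r0_cover]]] := rc 0%N.
have [_ [rn [rn_int rn_inj rn_cover]]] := rc n.
apply: (fundamental_identity (tower_subfield 0) (tower_subfield n) (tower_dval 0)
  (tower_dval n) (tower_subW (leq0n n)) (ram_gt0 n) (tower_dval0 n) k_complete
  pi0_k pi0_neq0 v0_pi0 pi_n pi_neq0 vn_pi r0_int r0_inj r0_cover rn_int rn_inj rn_cover).
exact: dim.
Qed.

Variable R : realType.

Definition nrm n (x : K) : R :=
  if x == 0 then 0 else expR (- ((v n x)%:~R / (ram n)%:R) * ln (q 0)%:R).

Lemma ln_q0_gt0 : 0 < ln (q 0)%:R :> R.
Proof. by rewrite ln_gt0 // ltr1n tower_residue_gt1. Qed.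

Lemma ram_neq0 n : (ram n)%:R != 0 :> R.
Proof. by rewrite pnatr_eq0 -lt0n ram_gt0. Qed.

Lemma nrmS n x : x \in Kn n -> nrm n.+1 x = nrm n x.
Proof.
move=> xn; rewrite /nrm; case: eqP => // /eqP x_neq0.
have step_neq0 : (ram_step n)%:R != 0 :> R by rewrite pnatr_eq0 -lt0n (ram_stepP n).1.
rewrite (ram_stepP n).2 // ramS natrM intrM; congr expR.
by field; rewrite step_neq0 ram_neq0.
Qed.

Lemma nrm_level a b x : (a <= b)%N -> x \in Kn a -> nrm b x = nrm a x.
Proof.
move=> /subnK <- xa; elim: (b - a)%N => [|d IHd]; first by rewrite add0n.
by rewrite addSn nrmS // (tower_subW (leq_addl d a)).
Qed.

Lemma absn_nrm n x : x \in Kn n -> absn R (v n) (q n) x `^ (m n)%:R^-1 = nrm n x.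
Proof.
move=> xn; rewrite /absn /nrm; case: eqP => [_|/eqP x_neq0].
  by rewrite powR0 // invr_eq0 pnatr_eq0 -lt0n tower_deg_gt0.
have qn_gt0 : (0 : R) < (q n)%:R by rewrite ltr0n (ltn_trans _ (tower_residue_gt1 n)).
have m_neq0 : (m n)%:R != 0 :> R by rewrite pnatr_eq0 -lt0n tower_deg_gt0.
have ln_qn : ln (q n)%:R = (m n)%:R * ln (q 0)%:R / (ram n)%:R :> R.
  have : (ram n)%:R * ln (q n)%:R = (m n)%:R * ln (q 0)%:R :> R.
    rewrite !mulr_natl -!lnXn ?ltr0n ?(ltn_trans _ (tower_residue_gt1 _)) //.
    by rewrite -!natrX tower_fundamental_identity.
  by move=> <-; rewrite [_ * ln _]mulrC mulfK ?ram_neq0.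
rewrite -powR_intmul ?ltW // -powRrM /powR gt_eqF // ln_qn intrN.
by congr expR; field; rewrite m_neq0 ram_neq0.
Qed.

Lemma normK_nrm n x : x \in Kn n -> normK R Kn v q m x = nrm n x.
Proof.
move=> xn; rewrite /normK; case: pselect => [ex|]; last by case; exists n.
by case: ex_minnP => n0 xn0 n0_min; rewrite absn_nrm // (nrm_level (n0_min n xn) xn0).
Qed.

Lemma nrm_ge0 n x : 0 <= nrm n x.
Proof. by rewrite /nrm; case: eqP => // _; rewrite ltW ?expR_gt0. Qed.

Lemma nrm0 n : nrm n 0 = 0. Proof. by rewrite /nrm eqxx. Qed.

Lemma nrmN n x : x \in Kn n -> nrm n (- x) = nrm n x.
Proof. by move=> xn; rewrite /nrm oppr_eq0 (dvalN (tower_subfield n) (tower_dval n)). Qed.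

Lemma nrm_le_vge n x y : y != 0 -> vge (v n) (v n y) x -> nrm n x <= nrm n y.
Proof.
move=> y_neq0 [->|vx]; first by rewrite nrm0 nrm_ge0.
rewrite /nrm (negPf y_neq0); case: eqP => [_|_]; first by rewrite ltW ?expR_gt0.
rewrite ler_expR ler_pM2r ?ln_q0_gt0 // lerN2 ler_pM2r ?invr_gt0 ?ltr0n ?ram_gt0 //.
by rewrite ler_int.
Qed.

Lemma nrm_le1 n x : vge (v n) 0 x -> nrm n x <= 1.
Proof.
move=> [->|vx]; first by rewrite nrm0.
rewrite /nrm; case: eqP => // _; rewrite expR_le1 mulNr oppr_le0.
by apply: mulr_ge0; rewrite ?divr_ge0 ?ler0z ?ler0n // ltW // ln_q0_gt0.
Qed.

Lemma nrm_ultra n x y : x \in Kn n -> y \in Kn n ->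
  nrm n (x - y) <= Num.max (nrm n x) (nrm n y).
Proof.
move=> xn yn; have hF := tower_subfield n; have hv := tower_dval n.
have [->|x_neq0] := eqVneq x 0; first by rewrite sub0r nrmN // le_max lexx orbT.
have [->|y_neq0] := eqVneq y 0; first by rewrite subr0 le_max lexx.
have [vxy|vyx] := leP (v n x) (v n y).
  by rewrite le_max (@nrm_le_vge n _ x) //; apply: (vgeB hF hv) => //; right.
rewrite le_max (@nrm_le_vge n _ y) ?orbT //.
by apply: (vgeB hF hv) => //; right; first exact: ltW.
Qed.

Lemma nrm_locally_const n x y : x \in Kn n -> y \in Kn n -> x != 0 ->
  vge (v n) (v n x + 1) (y - x) -> nrm n y = nrm n x.
Proof.
move=> xn yn x_neq0 vyx; have hF := tower_subfield n; have hv := tower_dval n.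
have y_neq0 : y != 0.
  apply/eqP => y0; move: vyx; rewrite y0 sub0r => -[/eqP|].
    by rewrite oppr_eq0 (negPf x_neq0).
  by rewrite (dvalN hF hv) //; lia.
by rewrite /nrm (negPf x_neq0) (negPf y_neq0) (dval_eq_vge hF hv xn yn x_neq0 vyx).
Qed.

Local Notation nK := (normK R Kn v q m).

Lemma tower_common x y : exists n, x \in Kn n /\ y \in Kn n.
Proof.
have [a xa] := tower_cover x; have [b yb] := tower_cover y.
by exists (maxn a b); rewrite (tower_subW (leq_maxl a b)) ?(tower_subW (leq_maxr a b)).
Qed.

Lemma normK0 : nK 0 = 0.
Proof. by rewrite (normK_nrm (subf0 (tower_subfield 0))) nrm0. Qed.

Lemma normKN x : nK (- x) = nK x.
Proof.
have [n xn] := tower_cover x.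
by rewrite (normK_nrm xn) (normK_nrm (subfN (tower_subfield n) xn)) nrmN.
Qed.

Lemma normK_ultra x y : nK (x + y) <= Num.max (nK x) (nK y).
Proof.
have [n [xn yn]] := tower_common x y; have hF := tower_subfield n.
rewrite (normK_nrm (subfD hF xn yn)) (normK_nrm xn) (normK_nrm yn) -(nrmN yn).
by rewrite -{1}[y]opprK; apply: nrm_ultra; rewrite ?subfN.
Qed.

Lemma continuous_ind_normK (f : R -> R[i]) : (forall s, 0 <= s <= 1 -> f s = f 0) ->
  continuous_ind Kn v (fun x => f (nK x)).
Proof.
move=> f_const V _ n x xn Vx; have [x0|x_neq0] := eqVneq x 0.
  exists 0 => y yn; rewrite x0 subr0 => vy; move: Vx.
  by rewrite x0 normK0 (normK_nrm yn) f_const ?nrm_ge0 ?nrm_le1.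
exists (v n x + 1) => y yn vyx.
by rewrite (normK_nrm yn) (nrm_locally_const xn yn x_neq0 vyx) -(normK_nrm xn).
Qed.

End Tower.

(** * Positive semidefinite kernels *)

Section PositiveKernels.
Variable C : numClosedFieldType.

Definition psd_kernel N (G : 'I_N -> 'I_N -> C) :=
  forall c : 'I_N -> C, 0 <= \sum_i \sum_j c i * (c j)^* * G i j.

Lemma eq_psd_kernel N (G G' : 'I_N -> 'I_N -> C) :
  G =2 G' -> psd_kernel G -> psd_kernel G'.
Proof. by move=> eGG' pG c; under eq_bigr do under eq_bigr do rewrite -eGG'. Qed.

Lemma psd_kernel0 N : psd_kernel (fun _ _ : 'I_N => 0).
Proof. by move=> c; rewrite big1 // => i _; rewrite big1 // => j _; rewrite mulr0. Qed.

Lemma psd_kernel_comb N (a : C) (G1 G2 : 'I_N -> 'I_N -> C) :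
  0 <= a -> psd_kernel G1 -> psd_kernel G2 -> psd_kernel (fun i j => a * G1 i j + G2 i j).
Proof.
move=> a_ge0 pG1 pG2 c.
have -> : \sum_i \sum_j c i * (c j)^* * (a * G1 i j + G2 i j) =
    a * (\sum_i \sum_j c i * (c j)^* * G1 i j) + \sum_i \sum_j c i * (c j)^* * G2 i j.
  rewrite mulr_sumr -big_split; apply: eq_bigr => i _.
  by rewrite mulr_sumr -big_split; apply: eq_bigr => j _; rewrite mulrDr mulrCA.
by rewrite addr_ge0 ?mulr_ge0.
Qed.

(* Grouping the indices by the value of [f] turns the form into a sum of
   squared moduli [|\sum_(i | f i == t) c i|^2]. *)
Lemma psd_kernel_eqfun N (T : finType) (f : 'I_N -> T) :
  psd_kernel (fun i j => (f i == f j)%:R).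
Proof.
move=> c; pose S t := \sum_(j | f j == t) c j.
have row i : \sum_j c i * (c j)^* * (f i == f j)%:R = c i * (S (f i))^*.
  rewrite /S rmorph_sum mulr_sumr [RHS]big_mkcond /=; apply: eq_bigr => j _.
  by rewrite eq_sym; case: eqP; rewrite ?mulr1 ?mulr0.
under eq_bigr do rewrite row.
rewrite (partition_big f predT) //=; apply: sumr_ge0 => t _.
rewrite (eq_bigr (fun i => c i * (S t)^*)); last by move=> i /= /eqP ->.
by rewrite -mulr_suml mul_conjC_ge0.
Qed.

Lemma psd_kernel_equiv N (E : rel 'I_N) :
  reflexive E -> symmetric E -> transitive E -> psd_kernel (fun i j => (E i j)%:R).
Proof.
move=> Er Es Et; apply: eq_psd_kernel (psd_kernel_eqfun (fun i => [set l | E i l])) => i j.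
suff -> : ([set l | E i l] == [set l | E j l]) = E i j by [].
apply/idP/idP => [/eqP cl_ij|Eij].
  have : j \in [set l | E j l] by rewrite inE.
  by rewrite -cl_ij inE.
apply/eqP/setP => l; rewrite !inE; apply/idP/idP => [Eil|Ejl]; last exact: (Et j).
by apply: (Et i); rewrite // Es.
Qed.

End PositiveKernels.

Section UltrametricKernels.
Variables (R : realType) (N : nat) (d : 'I_N -> 'I_N -> R).
Hypotheses (d_refl : forall i, d i i = 0) (d_sym : forall i j, d i j = d j i)
  (d_ultra : forall i j l, d i l <= Num.max (d i j) (d j l)).

Lemma ultra_ge0 i j : 0 <= d i j.
Proof. by have := d_ultra i j i; rewrite d_refl (d_sym j i) maxxx. Qed.

Lemma psd_kernel_ball r : 0 <= r -> psd_kernel (fun i j => ((d i j <= r)%R%:R : R[i])).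
Proof.
move=> r_ge0; apply: psd_kernel_equiv => [i|i j|j i l dij djl]; first by rewrite d_refl.
  by rewrite d_sym.
by apply: le_trans (d_ultra i j l) _; rewrite ge_max dij.
Qed.

(* Induction on the number of distances below [r]: peel off the largest
   distance [r'], i.e. write the kernel as [g r'] times a ball kernel plus a
   kernel supported below [r']. *)
Lemma psd_kernel_below n r (g : R -> R) :
  (#|[pred p : 'I_N * 'I_N | (d p.1 p.2 < r)%R]| <= n)%N ->
  (forall s, 0 <= s < r -> 0 <= g s) ->
  (forall s s', 0 <= s <= s' -> s' < r -> g s' <= g s) ->
  psd_kernel (fun i j => (if d i j < r then g (d i j) else 0)%:C).
Proof.
elim: n r g => [|n IHn] r g below_r g_ge0 g_mono.
  apply: eq_psd_kernel (@psd_kernel0 _ N) => i j; case: ifP => // dij.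
  by move: below_r; rewrite leqn0 => /eqP/card0_eq/(_ (i, j)); rewrite inE /= dij.
case: (pickP [pred p : 'I_N * 'I_N | d p.1 p.2 < r]) => [p0 p0_below|none_below]; last first.
  by apply: eq_psd_kernel (@psd_kernel0 _ N) => i j; have := none_below (i, j); rewrite /= => ->.
case: (@arg_maxP _ _ _ p0 _ (fun p => d p.1 p.2) p0_below) => [[i0 j0]] /= r'_lt r'_max.
set r' := d i0 j0; have r'_ge0 : 0 <= r' := ultra_ge0 i0 j0.
have max_below i j : d i j < r -> d i j <= r' by move=> dij; exact: (r'_max (i, j)).
have below_r' : psd_kernel (fun i j => (if d i j < r' then g (d i j) - g r' else 0)%:C).
  apply: (IHn r' (fun s => g s - g r')) => [|s /andP[s_ge0 sr']|s s' ss' s'r'].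
  - rewrite -ltnS (leq_trans _ below_r) // proper_card //; apply/properP; split.
      by apply/subsetP => p; rewrite !inE => /lt_trans; apply.
    by exists (i0, j0); rewrite !inE //= ltxx.
  - by rewrite subr_ge0 g_mono ?s_ge0 ?ltW.
  - by rewrite lerD2r g_mono // (lt_trans s'r').
have gr'_ge0 : 0 <= (g r')%:C :> R[i] by rewrite ler0c g_ge0 ?r'_ge0.
apply: eq_psd_kernel (psd_kernel_comb gr'_ge0 (psd_kernel_ball r'_ge0) below_r') => i j.
have -> : ((d i j <= r')%R%:R : R[i]) = ((d i j <= r')%R%:R : R)%:C by rewrite rmorph_nat.
rewrite -rmorphM -rmorphD; congr _%:C.
have [dij_lt|dij_ge] := ltP (d i j) r'; first by rewrite (lt_trans dij_lt) // ltW //=; ring.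
case: ifPn => [dij_r|]; last first.
  rewrite -leNgt => r_le_dij; have r'_lt_dij : r' < d i j := lt_le_trans r'_lt r_le_dij.
  by rewrite leNgt r'_lt_dij mulr0 addr0.
have -> : d i j = r' by apply/eqP; rewrite eq_le dij_ge max_below.
by rewrite lexx /=; ring.
Qed.

Lemma psd_kernel_ultra (g : R -> R) :
  (forall s, 0 <= s -> 0 <= g s) -> (forall s s', 0 <= s <= s' -> g s' <= g s) ->
  psd_kernel (fun i j => (g (d i j))%:C).
Proof.
move=> g_ge0 g_mono; pose r := 1 + \sum_i \sum_j d i j.
have d_lt_r i j : d i j < r.
  rewrite /r (bigD1 i) //= (bigD1 j) //=.
  have row_ge0 : 0 <= \sum_(j' | j' != j) d i j' by rewrite sumr_ge0 // => *; exact: ultra_ge0.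
  have rows_ge0 : 0 <= \sum_(i' | i' != i) \sum_j' d i' j'.
    by rewrite !sumr_ge0 // => *; rewrite sumr_ge0 // => *; exact: ultra_ge0.
  lra.
apply: eq_psd_kernel (psd_kernel_below (r := r) (g := g) (leqnn _) _ _).
- by move=> i j /=; rewrite d_lt_r.
- by move=> s /andP[s_ge0 _]; exact: g_ge0.
- by move=> s s' ss' _; exact: g_mono.
Qed.

End UltrametricKernels.

Lemma rho_ge0 (R : realType) (alpha s t : R) : 0 <= rho alpha s t.
Proof. by rewrite /rho; case: ifP => // _; rewrite ltW ?expR_gt0. Qed.

Lemma rho_le1 (R : realType) (alpha s t : R) : s <= 1 -> rho alpha s t = 1.
Proof. by rewrite /rho ltNge => ->. Qed.

Lemma rho_nonincr (R : realType) (alpha t s s' : R) : 0 < alpha -> 0 < t ->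
  0 <= s <= s' -> rho alpha s' t <= rho alpha s t.
Proof.
move=> alpha_gt0 t_gt0 /andP[s_ge0 ss']; have s'_ge0 := le_trans s_ge0 ss'; rewrite /rho.
case: ifPn => [s'_gt1|]; case: ifPn => [s_gt1|s_le1] //.
- rewrite ler_expR lerN2 ler_pM2l //.
  by apply: (ge0_ler_powR (ltW alpha_gt0)) ss'; rewrite nnegrE.
- by rewrite expR_le1 oppr_le0 mulr_ge0 ?powR_ge0 ?ltW.
- by rewrite -leNgt => s'_le1; move: s_gt1; rewrite ltNge (le_trans ss' s'_le1).
Qed.

Theorem proposition8 (R : realType) (K : fieldType) (Kn : nat -> {pred K})
  (v : nat -> K -> int) (q m : nat -> nat) (alpha : R) :
  local_tower Kn v q m -> 0 < alpha ->
  forall t : R, 0 < t ->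
    let phi := fun xi : K => (rho alpha (normK R Kn v q m xi) t)%:C in
    continuous_ind Kn v phi /\ positive_definite phi.
Proof.
move=> ht alpha_gt0 t t_gt0 phi; split.
  apply: (@continuous_ind_normK _ _ _ _ _ ht R (fun s => (rho alpha s t)%:C)).
  by move=> s /andP[_ s_le1]; rewrite !rho_le1 ?ler01.
move=> N xi; apply: (@psd_kernel_ultra R N (fun i j => normK R Kn v q m (xi i - xi j))
  _ _ _ (fun s => rho alpha s t)) => [i|i j|i j l|s _|s s'].
- by rewrite subrr (normK0 ht).
- by rewrite -opprB (normKN ht).
- by rewrite -[xi i - xi l](subrKA (xi j)) (normK_ultra ht).
- exact: rho_ge0.
- exact: rho_nonincr.
Qed.
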